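(* Let $p,q,r$ be distinct sentential variables and let $\pi$ be any weighting function. For each of the following items, there exist a $\pi$-based selection function $\sigma$ and a $\Delta$ model $M$ with selection function $\sigma$ witnessing failure, namely: for items given as a pair ''$\varphi$ does not imply $\psi$'', some world lies in $[\![\varphi]\!]_M\setminus[\![\psi]\!]_M$; for items given as ''$\psi$ is not valid'', some world lies outside $[\![\psi]\!]_M$. (a) $\mathbb{C}(p\vee q,r)$ does not imply $\mathbb{C}(p,r)\wedge\mathbb{C}(q,r)$; (b) $\mathbb{O}(p\wedge q)$ does not imply $\mathbb{O}q$; (c) $\mathbb{O}(p\vee q)\wedge\mathbb{O}(\neg q)$ does not imply $\mathbb{O}p$; (d) $\mathbb{C}(p,q)$ does not imply $\mathbb{C}(p\wedge r,q)$; (e) $\mathbb{C}(p,q)\wedge\mathbb{O}p$ does not imply $\mathbb{O}q$; (f) $\mathbb{O}(p\rightarrow q)$ does not imply $\mathbb{O}(p)\rightarrow\mathbb{O}(q)$; (g) $\mathbb{C}(p,q)\wedge\mathbb{C}(q,r)$ does not imply $\mathbb{C}(p,r)$; (h) $\mathbb{O}p\wedge\mathbb{O}q$ does not imply $\mathbb{O}(p\wedge q)$; (i) $\mathbb{C}(p,q)\wedge\mathbb{C}(p,r)$ does not imply $\mathbb{C}(p,q\wedge r)$; (j) $\mathbb{O}\mathbb{O}p$ does not imply $\mathbb{O}p$; (k) $\mathbb{C}(p,q)\wedge\mathbb{C}(r,q)$ does not imply $\mathbb{C}(p\wedge r,q)$; (l) $\mathbb{O}(\mathbb{O}p\rightarrow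 p)$ is not valid; (m) $\mathbb{O}p$ does not imply $\mathbb{O}(p\vee q)$.
   Context: Fix a set $\mathrm{PROPS}$ of sentential variables (containing $p,q,r$). The language $\mathcal{L}$: every $v\in\mathrm{PROPS}$ is a formula; if $\varphi,\psi$ are formulas so are $\neg\varphi$, $(\varphi\wedge\psi)$, $(\varphi\succeq\psi)$. Abbreviations: $\vee,\rightarrow,\leftrightarrow$ as usual; $\varphi\succ\psi := (\varphi\succeq\psi)\wedge\neg(\psi\succeq\varphi)$; $\top := (v_0\rightarrow v_0)$ for a fixed variable $v_0$. Deontic operators: $\mathbb{C}(\varphi,\psi) := (\varphi\wedge\psi)\succ(\varphi\wedge\neg\psi)$; $\mathbb{O}\psi := \mathbb{C}(\top,\psi)$; $\mathbb{P}\psi:=\neg\mathbb{O}\neg\psi$. A model is $M=(W,\sigma,u,t)$ with $W$ a nonempty set, $\sigma:W\times\{A\subseteq W:A\ne\emptyset\}\to W$ with $\sigma(w,A)\in A$, $u:W\to\mathbb{R}$, and $t:\mathrm{PROPS}\to\mathcal{P}(W)$. Semantics: $[\![v]\!]_M=t(v)$; $[\![\neg\theta]\!]_M=W\setminus[\![\theta]\!]_M$; $[\![\theta\wedge\psi]\!]_M=[\![\theta]\!]_M\cap[\![\psi]\!]_M$; $[\![\theta\succeq\psi]\!]_M=\emptyset$ if either $[\![\theta]\!]_M$ or $[\![\psi]\!]_M$ is empty, otherwise $\{w: u(\sigma(w,[\![\theta]\!]_M))\ge u(\sigma(w,[\![\psi]\!]_M))\}$. A $\Delta$ model is a model with $W=\mathcal{P}(\mathrm{PROPS})$,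 $t(v)=\{w: v\in w\}$ for all $v$, and $\sigma$ $\Delta$-based: for all $w_0$ and nonempty $A$ there is no $w_1\in A$ with $w_0\triangle w_1\subsetneq w_0\triangle\sigma(w_0,A)$ ($\triangle$ = symmetric difference); $u$ is arbitrary. A weighting function is a map $\pi:\mathrm{PROPS}\to(0,\infty)$. For worlds $w_0,w_1$, $d_\pi(w_0,w_1):=\sum_{v\in w_0\triangle w_1}\pi(v)$. A selection function $\sigma$ (on $W=\mathcal{P}(\mathrm{PROPS})$) is $\pi$-based if for every $w\in W$ and nonempty $A\subseteq W$ there is no $w'\in A$ with $d_\pi(w,w')<d_\pi(w,\sigma(w,A))$. (Every $\pi$-based selection function is $\Delta$-based.) *)

From HB Require Import structures.
From mathcomp Require Import all_boot all_order all_algebra.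
From mathcomp Require Import reals.
Set Implicit Arguments. Unset Strict Implicit. Unset Printing Implicit Defensive.
Import Order.TTheory GRing.Theory Num.Theory.
Local Open Scope ring_scope.

Inductive form (P : Type) : Type :=
  | Var  of P
  | Neg  of form P
  | And  of form P & form P
  | Pref of form P & form P.   (* (phi >= psi) *)

Arguments Var {P}. Arguments Neg {P}. Arguments And {P}. Arguments Pref {P}.

Section Abbrev.
Variable P : Type.
Definition Or  (a b : form P) := Neg (And (Neg a) (Neg b)).
Definition Imp (a b : form P) := Neg (And a (Neg b)).
Definition Strict (a b : form P) := And (Pref a b) (Neg (Pref b a)).
Definition Top (v0 : P) := Imp (Var v0) (Var v0).
Definition Cond (a b : form P) := Strict (And a b) (And a (Neg b)).
Definition Ought (v0 : P) (b : form P) := Cond (Top v0) b.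
Definition Perm (v0 : P) (b : form P) := Neg (Ought v0 (Neg b)).
End Abbrev.

(* Semantics in a model (W, sigma, u, t), W a (finite) set of worlds.
   sigma is total on {set W}; only its values on nonempty sets matter. *)
Section Semantics.
Variables (R : realType) (P : Type) (W : finType).
Variables (sigma : W -> {set W} -> W) (u : W -> R) (t : P -> {set W}).

Fixpoint sem (f : form P) : {set W} :=
  match f with
  | Var v => t v
  | Neg a => ~: sem a
  | And a b => sem a :&: sem b
  | Pref a b =>
      let A := sem a in let B := sem b in
      if (A == set0) || (B == set0) then set0
      else [set w | u (sigma w B) <= u (sigma w A)]
  end.
End Semantics.

Definition is_selection (W : finType) (sigma : W -> {set W} -> W) :=
  forall w (A : {set W}), A != set0 -> sigma w A \in A.

Definition symdiff (T : finType) (A B : {set T}) : {set T} := (A :\: B) :|: (B :\: A).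

Definition world (P : finType) := {set P}.

Definition delta_based (P : finType) (sigma : world P -> {set world P} -> world P) :=
  forall (w0 : world P) (A : {set world P}), A != set0 ->
    ~ exists2 w1, w1 \in A & symdiff w0 w1 \proper symdiff w0 (sigma w0 A).

Definition dpi (R : realType) (P : finType) (pi : P -> R) (w0 w1 : world P) : R :=
  \sum_(v in symdiff w0 w1) pi v.

Definition pi_based (R : realType) (P : finType) (pi : P -> R)
    (sigma : world P -> {set world P} -> world P) :=
  forall (w : world P) (A : {set world P}), A != set0 ->
    ~ exists2 w', w' \in A & dpi pi w w' < dpi pi w (sigma w A).

Definition tDelta (P : finType) (v : P) : {set world P} := [set w : world P | v \in w].

Definition semD (R : realType) (P : finType) (sigma : world P -> {set world P} -> world P)
    (u : world P -> R) (f : form P) : {set world P} :=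
  sem sigma u (@tDelta P) f.

Definition delta_selection (P : finType) (sigma : world P -> {set world P} -> world P) :=
  is_selection sigma /\ delta_based sigma.

Definition fails_implication (R : realType) (P : finType) (pi : P -> R) (phi psi : form P) :=
  exists (sigma : world P -> {set world P} -> world P) (u : world P -> R),
    [/\ delta_selection sigma, pi_based pi sigma &
        exists w, w \in semD sigma u phi /\ w \notin semD sigma u psi].

Definition fails_validity (R : realType) (P : finType) (pi : P -> R) (psi : form P) :=
  exists (sigma : world P -> {set world P} -> world P) (u : world P -> R),
    [/\ delta_selection sigma, pi_based pi sigma &
        exists w, w \notin semD sigma u psi].

From Pilot Require Import Defs.
From HB Require Import structures.
From mathcomp Require Import all_boot all_order all_algebra.
From mathcomp Require Import reals.
Import Order.TTheory GRing.Theory Num.Theory.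
Local Open Scope ring_scope.
Set Implicit Arguments. Unset Strict Implicit.

(* Take for sigma a d_pi-nearest selection and a utility that depends only on
   the truth values of p, q and r.  The sets compared by a preference are then
   cylinders over p, q, r, and whenever such a cylinder has a least element for
   inclusion of symmetric differences with the current world, every pi-based
   selection must pick it, whatever the weights.  Hence truth in the Delta model
   is computed in the eight-valuation model over p, q, r (left undetermined
   where no least element exists), and each item becomes a finite check of a
   utility table at one valuation. *)

Lemma in_symdiff (T : finType) (A B : {set T}) x :
  (x \in symdiff A B) = ((x \in A) != (x \in B)).
Proof. by rewrite !inE; case: (x \in A); case: (x \in B). Qed.

Lemma symdiff_inj (T : finType) (A : {set T}) : injective (symdiff A).
Proof.
move=> B C /setP eqBC; apply/setP => x; move: (eqBC x); rewrite !in_symdiff.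
by case: (x \in A); case: (x \in B); case: (x \in C).
Qed.

Section PiBased.
Variables (R : realType) (P : finType) (pi : P -> R).
Hypothesis pi_gt0 : forall v, 0 < pi v.

Lemma dpi_lt_proper (w w0 w1 : world P) :
  symdiff w w0 \proper symdiff w w1 -> dpi pi w w0 < dpi pi w w1.
Proof.
case/properP => sub01 [v v1 v0]; rewrite /dpi [X in _ < X](big_setID (symdiff w w0)) /=.
rewrite (setIidPr sub01) ltrDl (bigD1 v) /=; last by rewrite inE v1 v0.
by rewrite ltr_pwDl // sumr_ge0 // => x _; apply: ltW.
Qed.

Lemma pi_based_select_least sigma (w m : world P) (A : {set world P}) :
  is_selection sigma -> pi_based pi sigma -> m \in A ->
  (forall x, x \in A -> symdiff w m \subset symdiff w x) -> sigma w A = m.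
Proof.
move=> sel pib mA least; have A0 : A != set0 by apply/set0Pn; exists m.
have sA := sel w A A0; apply: (@symdiff_inj _ w); apply/esym/eqP.
rewrite eqEproper least //=; apply/negP => /dpi_lt_proper lt_m.
by apply: (pib w A A0); exists m.
Qed.

Definition sigma_pi (w : world P) (A : {set world P}) : world P :=
  if [pick x in A] is Some x0 then [arg min_(x < x0 in A) dpi pi w x]%O else w.

Lemma sigma_piP w (A : {set world P}) : A != set0 ->
  sigma_pi w A \in A /\ forall x, x \in A -> dpi pi w (sigma_pi w A) <= dpi pi w x.
Proof.
rewrite /sigma_pi; case: pickP => [x0 x0A _ | noA /negP[]]; last first.
  by apply/eqP/setP => x; rewrite inE noA.
by case: arg_minP.
Qed.

Lemma sigma_pi_based : pi_based pi sigma_pi.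
Proof.
move=> w A A0 [x xA]; case: (sigma_piP w A0) => _ /(_ x xA).
by rewrite leNgt => /negP.
Qed.

Lemma sigma_pi_delta_selection : delta_selection sigma_pi.
Proof.
split=> [w A A0 | w A A0 [x xA /dpi_lt_proper]]; first by case: (sigma_piP w A0).
by case: (sigma_piP w A0) => _ /(_ x xA); rewrite leNgt => /negP.
Qed.

End PiBased.

Fixpoint form_map (T U : Type) (f : T -> U) (phi : Defs.form T) : Defs.form U :=
  match phi with
  | Var v => Var (f v)
  | Neg a => Neg (form_map f a)
  | And a b => And (form_map f a) (form_map f b)
  | Pref a b => Pref (form_map f a) (form_map f b)
  end.

Arguments semD : simpl never.

Section SemanticClauses.
Variables (R : realType) (P : finType).
Variables (sigma : world P -> {set world P} -> world P) (u : world P -> R).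

Lemma in_semD_Var w v : (w \in semD sigma u (Var v)) = (v \in w).
Proof. by rewrite /semD /= inE. Qed.

Lemma in_semD_Neg w a : (w \in semD sigma u (Neg a)) = (w \notin semD sigma u a).
Proof. by rewrite /semD /= inE. Qed.

Lemma in_semD_And w a b :
  (w \in semD sigma u (And a b)) = (w \in semD sigma u a) && (w \in semD sigma u b).
Proof. by rewrite /semD /= inE. Qed.

Lemma in_semD_Pref w a b :
  (w \in semD sigma u (Pref a b)) =
  [&& semD sigma u a != set0, semD sigma u b != set0 &
      u (sigma w (semD sigma u b)) <= u (sigma w (semD sigma u a))].
Proof.
rewrite /semD /=; case: ifP => [/orP[] /eqP-> | /norP[-> ->]];
  by rewrite ?inE ?eqxx ?andbF.
Qed.

End SemanticClauses.

Inductive atom := Ap | Aq | Ar.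

Definition val3 := (bool * bool * bool)%type.

Definition coord (t : val3) (i : atom) : bool :=
  match i with Ap => t.1.1 | Aq => t.1.2 | Ar => t.2 end.

Definition val3s : seq val3 :=
  let bs := [:: true; false] in
  [seq (ab, c) | ab <- [seq (a, b) | a <- bs, b <- bs], c <- bs].

Lemma mem_val3s t : t \in val3s.
Proof. by case: t => [[[] []] []]. Qed.

Definition keeps_changes (t b c : val3) : bool :=
  let kept i := (coord t i != coord b i) ==> (coord c i == coord b i) in
  [&& kept Ap, kept Aq & kept Ar].

Lemma keeps_changesP t b c i :
  keeps_changes t b c -> coord t i != coord b i -> coord c i = coord b i.
Proof.
case: i => /and3P[ha hb hc] ne; apply/eqP.
- exact: (implyP ha).
- exact: (implyP hb).
- exact: (implyP hc).
Qed.

(* [b] is the least point of [g] for the sets of atoms changed from [t]. *)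
Definition least_change (g : val3 -> bool) (t b : val3) : bool :=
  g b && all (fun c => g c ==> keeps_changes t b c) val3s.

Definition nearest (g : val3 -> bool) (t : val3) : val3 :=
  nth t val3s (find (least_change g t) val3s).

Lemma nearestP g t : has (least_change g t) val3s -> least_change g t (nearest g t).
Proof. exact: nth_find. Qed.

(* The letter [None] stands for the variable [v0] of [Top]. *)
Definition letter := option atom.

Definition v0_contradiction (a : Defs.form letter) : bool :=
  if a is And (Var None) (Neg (Var None)) then true else false.

Definition pref3 (util : val3 -> nat) (ea eb : val3 -> option bool) (t : val3) :=
  let ga s := odflt false (ea s) in let gb s := odflt false (eb s) in
  if ~~ all (fun s => isSome (ea s) && isSome (eb s)) val3s then None
  else if ~~ (has ga val3s && has gb val3s) then Some false
  else if has (least_change ga t) val3s && has (least_change gb t) val3s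
  then Some (util (nearest gb t) <= util (nearest ga t))%N
  else None.

(* [None] means undetermined; [Top] is recognised syntactically because [v0]
   need not be among p, q, r. *)
Fixpoint sem3 (util : val3 -> nat) (f : Defs.form letter) : val3 -> option bool :=
  match f with
  | Var (Some i) => fun t => Some (coord t i)
  | Var None => fun _ => None
  | Neg a => if v0_contradiction a then fun _ => Some true
             else fun t => omap negb (sem3 util a t)
  | And a b => fun t =>
      if (sem3 util a t, sem3 util b t) is (Some x, Some y) then Some (x && y) else None
  | Pref a b => pref3 util (sem3 util a) (sem3 util b)
  end.

Section Reduction.
Variables (R : realType) (P : finType) (pi : P -> R) (v0 p q r : P).
Hypotheses (pi_gt0 : forall v, 0 < pi v) (pq : p != q) (pr : p != r) (qr : q != r).

Definition atom_var (i : atom) : P := match i with Ap => p | Aq => q | Ar => r end.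

Definition letter_var : letter -> P := oapp atom_var v0.

Definition val3_of (w : world P) : val3 := (p \in w, q \in w, r \in w).

Lemma coord_val3_of w i : coord (val3_of w) i = (atom_var i \in w).
Proof. by case: i. Qed.

Definition override (w : world P) (s : val3) : world P :=
  [set v | if v == p then s.1.1 else if v == q then s.1.2
            else if v == r then s.2 else v \in w].

Lemma val3_of_override w s : val3_of (override w s) = s.
Proof.
rewrite /val3_of !inE eqxx eq_sym (negPf pq) eqxx eq_sym (negPf pr).
by rewrite eq_sym (negPf qr) eqxx; case: s => [[]].
Qed.

Lemma symdiff_override w s v : v \in symdiff w (override w s) ->
  exists2 i, v = atom_var i & coord (val3_of w) i != coord s i.
Proof.
rewrite in_symdiff [v \in override _ _]inE.
case: (eqVneq v p) => [-> ne|_]; first by exists Ap.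
case: (eqVneq v q) => [-> ne|_]; first by exists Aq.
by case: (eqVneq v r) => [-> ne|_]; [exists Ar | rewrite eqxx].
Qed.

Definition cylinder (g : val3 -> bool) : {set world P} := [set w | g (val3_of w)].

Lemma cylinder_eq0 g : (cylinder g == set0) = ~~ has g val3s.
Proof.
apply/eqP/hasPn => [g0 s _ | nog]; last first.
  by apply/setP => w; rewrite !inE; apply/negbTE/nog/mem_val3s.
apply/negP => gs; move/setP: g0 => /(_ (override set0 s)).
by rewrite !inE val3_of_override gs.
Qed.

Variables (sigma : world P -> {set world P} -> world P) (util : val3 -> nat).
Hypotheses (sigma_sel : is_selection sigma) (sigmaP : pi_based pi sigma).

Let u (w : world P) : R := (util (val3_of w))%:R.

Lemma sigma_cylinder g w : has (least_change g (val3_of w)) val3s ->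
  sigma w (cylinder g) = override w (nearest g (val3_of w)).
Proof.
move=> /nearestP /andP[gb /allP least]; apply: pi_based_select_least => //.
  by rewrite inE val3_of_override.
move=> x; rewrite inE => gx; apply/subsetP => _ /symdiff_override[i -> ne].
move/implyP/(_ gx)/keeps_changesP/(_ ne): (least _ (mem_val3s (val3_of x))).
by rewrite in_symdiff -!coord_val3_of => ->.
Qed.

Lemma v0_contradiction_sem a w : v0_contradiction a ->
  w \notin semD sigma u (form_map letter_var a).
Proof.
by case: a => // -[] // -[] // -[] // -[] // -[] // _; rewrite in_semD_And in_semD_Neg andbN.
Qed.

Lemma sem_cylinder (S : {set world P}) (e : val3 -> option bool) :
  (forall t b w, e t = Some b -> val3_of w = t -> (w \in S) = b) ->
  all (fun t => isSome (e t)) val3s -> S = cylinder (fun t => odflt false (e t)).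
Proof.
move=> sound /allP tot; apply/setP => w; rewrite inE.
by case E: (e (val3_of w)) (tot _ (mem_val3s (val3_of w))) => [b|] //= _; apply: sound E _.
Qed.

Lemma sem3_sound f t b w : sem3 util f t = Some b -> val3_of w = t ->
  (w \in semD sigma u (form_map letter_var f)) = b.
Proof.
elim: f t b w => [[i|] | a IHa | a IHa c IHc | a IHa c IHc] t b w //=.
- by move=> [<-] <-; rewrite in_semD_Var -coord_val3_of.
- case: ifP => [contra [<-] _ | _]; first by rewrite in_semD_Neg v0_contradiction_sem.
  by case E: (sem3 util a t) => [x|] //= [<-] wt; rewrite in_semD_Neg (IHa _ _ _ E wt).
- case Ea: (sem3 util a t) => [x|] //; case Ec: (sem3 util c t) => [y|] // [<-] wt.
  by rewrite in_semD_And (IHa _ _ _ Ea wt) (IHc _ _ _ Ec wt).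
rewrite /pref3; case: allP => // tot.
have tota : all (fun s => isSome (sem3 util a s)) val3s.
  by apply/allP => s /tot /andP[].
have totc : all (fun s => isSome (sem3 util c s)) val3s.
  by apply/allP => s /tot /andP[].
rewrite in_semD_Pref (sem_cylinder IHa tota) (sem_cylinder IHc totc) !cylinder_eq0 !negbK.
case: ifP => [| /negbFE/andP[-> ->]].
  by case/nandP => /negPf-> [<-] _; rewrite ?andFb ?andbF.
case: ifP => // /andP[na nc] [<-] wt.
by rewrite !sigma_cylinder wt // /u !val3_of_override ler_nat.
Qed.

End Reduction.

Definition refutes3 (util : val3 -> nat) (t : val3) (phi psi : Defs.form letter) :=
  (sem3 util phi t == Some true) && (sem3 util psi t == Some false).

Definition invalid3 (util : val3 -> nat) (t : val3) (psi : Defs.form letter) :=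
  sem3 util psi t == Some false.

Notation Vp := (Var (Some Ap)).
Notation Vq := (Var (Some Aq)).
Notation Vr := (Var (Some Ar)).
Notation O3 := (Ought None).

Lemma refute_a :
  refutes3 (fun '(a, b, c) => if a && ~~ b && c then 1 else 0)%N
    (true, false, false)
    (Cond (Or Vp Vq) Vr) (And (Cond Vp Vr) (Cond Vq Vr)).
Proof. by []. Qed.

Lemma refute_b :
  refutes3 (fun '(a, b, c) => if a && b then 1 else 0)%N
    (false, false, false)
    (O3 (And Vp Vq)) (O3 Vq).
Proof. by []. Qed.

Lemma refute_c :
  refutes3 (fun '(a, b, c) => if a then (if b then 1 else 2) else (if b then 1 else 0))%N
    (true, true, false)
    (And (O3 (Or Vp Vq)) (O3 (Neg Vq))) (O3 Vp).
Proof. by []. Qed.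

Lemma refute_d :
  refutes3 (fun '(a, b, c) => if a && b && ~~ c then 1 else 0)%N
    (false, false, false)
    (Cond Vp Vq) (Cond (And Vp Vr) Vq).
Proof. by []. Qed.

Lemma refute_e :
  refutes3 (fun '(a, b, c) => if a then (if b then 2 else 1) else 0)%N
    (false, false, false)
    (And (Cond Vp Vq) (O3 Vp)) (O3 Vq).
Proof. by []. Qed.

Lemma refute_f :
  refutes3 (fun '(a, b, c) => if a then (if b then 3 else 0) else 1)%N
    (false, true, false)
    (O3 (Imp Vp Vq)) (Imp (O3 Vp) (O3 Vq)).
Proof. by []. Qed.

Lemma refute_g :
  refutes3 (fun '(a, b, c) => if (a && b && ~~ c) || (~~ a && b && c) then 1 else 0)%N
    (false, false, false)
    (And (Cond Vp Vq) (Cond Vq Vr)) (Cond Vp Vr).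
Proof. by []. Qed.

Lemma refute_h :
  refutes3 (fun '(a, b, c) => if a != b then 1 else 0)%N
    (false, false, false)
    (And (O3 Vp) (O3 Vq)) (O3 (And Vp Vq)).
Proof. by []. Qed.

Lemma refute_i :
  refutes3 (fun '(a, b, c) => if a && (b != c) then 1 else 0)%N
    (false, false, false)
    (And (Cond Vp Vq) (Cond Vp Vr)) (Cond Vp (And Vq Vr)).
Proof. by []. Qed.

Lemma refute_j :
  refutes3 (fun '(a, b, c) => if a then (if b then 3 else 0) else (if b then 2 else 1))%N
    (false, false, false)
    (O3 (O3 Vp)) (O3 Vp).
Proof. by []. Qed.

Lemma refute_k :
  refutes3 (fun '(a, b, c) => if (a && b && ~~ c) || (~~ a && b && c) then 1 else 0)%N
    (false, false, false)
    (And (Cond Vp Vq) (Cond Vr Vq)) (Cond (And Vp Vr) Vq).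
Proof. by []. Qed.

Lemma refute_l :
  invalid3 (fun _ => 0)%N
    (false, false, false)
    (O3 (Imp (O3 Vp) Vp)).
Proof. by []. Qed.

Lemma refute_m :
  refutes3 (fun '(a, b, c) => if a && b then 1 else 0)%N
    (false, true, false)
    (O3 Vp) (O3 (Or Vp Vq)).
Proof. by []. Qed.

Section Countermodels.
Variables (R : realType) (P : finType) (pi : P -> R) (v0 p q r : P).
Hypotheses (pi_gt0 : forall v, 0 < pi v) (pq : p != q) (pr : p != r) (qr : q != r).

Let to_P : Defs.form letter -> Defs.form P := form_map (letter_var v0 p q r).

Let sem3_sound_pi util := sem3_sound v0 pi_gt0 pq pr qr (util := util)
  (sigma_pi_delta_selection pi_gt0).1 (sigma_pi_based (pi := pi)).

Lemma refutes3_fails_implication util t phi psi :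
  refutes3 util t phi psi -> fails_implication pi (to_P phi) (to_P psi).
Proof.
case/andP => /eqP phi_t /eqP psi_t.
exists (sigma_pi pi), (fun w => (util (val3_of p q r w))%:R); split.
- exact: sigma_pi_delta_selection.
- exact: sigma_pi_based.
exists (override p q r set0 t); have wt := val3_of_override pq pr qr set0 t.
by rewrite (sem3_sound_pi phi_t wt) (sem3_sound_pi psi_t wt).
Qed.

Lemma invalid3_fails_validity util t psi :
  invalid3 util t psi -> fails_validity pi (to_P psi).
Proof.
move=> /eqP psi_t; exists (sigma_pi pi), (fun w => (util (val3_of p q r w))%:R); split.
- exact: sigma_pi_delta_selection.
- exact: sigma_pi_based.
exists (override p q r set0 t); have wt := val3_of_override pq pr qr set0 t.
by rewrite (sem3_sound_pi psi_t wt).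
Qed.

End Countermodels.

Theorem proposition5p5 (R : realType) (PROPS : finType) (v0 p q r : PROPS)
    (pi : PROPS -> R) :
  p != q -> p != r -> q != r -> (forall v, 0 < pi v) ->
  let C := @Cond PROPS in let O := Ought v0 in
  let P := Var p in let Q := Var q in let Rv := Var r in
  fails_implication pi (C (Or P Q) Rv) (And (C P Rv) (C Q Rv)) /\
      fails_implication pi (O (And P Q)) (O Q) /\
      fails_implication pi (And (O (Or P Q)) (O (Neg Q))) (O P) /\
      fails_implication pi (C P Q) (C (And P Rv) Q) /\
      fails_implication pi (And (C P Q) (O P)) (O Q) /\
      fails_implication pi (O (Imp P Q)) (Imp (O P) (O Q)) /\
      fails_implication pi (And (C P Q) (C Q Rv)) (C P Rv) /\
      fails_implication pi (And (O P) (O Q)) (O (And P Q)) /\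
      fails_implication pi (And (C P Q) (C P Rv)) (C P (And Q Rv)) /\
      fails_implication pi (O (O P)) (O P) /\
      fails_implication pi (And (C P Q) (C Rv Q)) (C (And P Rv) Q) /\
      fails_validity pi (O (Imp (O P) P)) /\
      fails_implication pi (O P) (O (Or P Q)).
Proof.
move=> pq pr qr pi_gt0 C O P Q Rv.
have fails := refutes3_fails_implication v0 pi_gt0 pq pr qr.
split; first exact: fails refute_a.
split; first exact: fails refute_b.
split; first exact: fails refute_c.
split; first exact: fails refute_d.
split; first exact: fails refute_e.
split; first exact: fails refute_f.
split; first exact: fails refute_g.
split; first exact: fails refute_h.
split; first exact: fails refute_i.
split; first exact: fails refute_j.
split; first exact: fails refute_k.
split; first exact: (invalid3_fails_validity v0 pi_gt0 pq pr qr refute_l).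
exact: fails refute_m.
Qed.
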